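(* Let $m,r$ be positive integers, let $W\in\mathbb{R}^{m\times m}$ be a fixed real symmetric matrix, $\lambda\ge 0$, $L\ge 1$, and $0<\eta\le 1/L$. Let $F(W,U):=\frac{1}{2}\|W-UU^{T}\|_{F}^{2}$ for $U\in\mathbb{R}^{m\times r}$, so that $\nabla_{U}F(W,U)=2(UU^{T}-W)U$, and let \[ \psi(U):= \frac{3}{2}\|U\|_{F}^{4}+\|W\|_{F}\|U\|_{F}^{2},\qquad \nabla\psi(U)=6\|U\|_F^2U+2\|W\|_F U. \] Given $\bar{U}\in\mathbb{R}^{m\times r}$, let \[ U^{+}=\mathrm{arg\,min}_{U\in\mathbb{R}^{m\times r}}\ \frac{\lambda}{2}\|U\|_{F}^{2} +\langle \nabla_{U}F(W,\bar{U}),U-\bar{U}\rangle +\frac{1}{\eta} D_{\psi}(U,\bar{U}). \] Set $G:=\nabla\psi(\bar{U})-\eta\nabla_{U}F(W,\bar{U})$. Then \[ U^{+}=\frac{1}{t}\,G, \] where $t\ge 0$ satisfies $t^{3}-(\lambda\eta+2\|W\|_{F})t^{2}-6\|G\|_{F}^{2}=0$.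
   Context: $\|\cdot\|_F$ is the Frobenius norm and $\langle Y_1,Y_2\rangle:=\mathrm{tr}(Y_1^{T}Y_2)$. The Bregman distance of $\psi$ is $D_{\psi}(X,Y):=\psi(X)-\psi(Y)-\langle\nabla\psi(Y),X-Y\rangle$. In the paper, $W=W^{k+1}$ and $\bar{U}=\bar{U}^{k}$ are current iterates of an alternating algorithm, $U^{+}=U^{k+1}$, $G=G^{k}$, and $t=t_k$. *)

From HB Require Import structures.
From mathcomp Require Import all_boot all_order all_algebra.
From mathcomp Require Import reals.
Set Implicit Arguments. Unset Strict Implicit. Unset Printing Implicit Defensive.
Import Order.TTheory GRing.Theory Num.Theory.
Local Open Scope ring_scope.

Section Defs.
Variable R : realType.

Definition frob_inner (m r : nat) (Y1 Y2 : 'M[R]_(m, r)) : R := \tr (Y1^T *m Y2).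

Definition frob_norm (m r : nat) (Y : 'M[R]_(m, r)) : R := Num.sqrt (frob_inner Y Y).

Definition Fobj (m r : nat) (W : 'M[R]_m) (U : 'M[R]_(m, r)) : R :=
  2^-1 * frob_norm (W - U *m U^T) ^+ 2.

Definition gradF (m r : nat) (W : 'M[R]_m) (U : 'M[R]_(m, r)) : 'M[R]_(m, r) :=
  2%:R *: ((U *m U^T - W) *m U).

Definition psi (m r : nat) (W : 'M[R]_m) (U : 'M[R]_(m, r)) : R :=
  3%:R / 2%:R * frob_norm U ^+ 4 + frob_norm W * frob_norm U ^+ 2.

Definition gradpsi (m r : nat) (W : 'M[R]_m) (U : 'M[R]_(m, r)) : 'M[R]_(m, r) :=
  (6%:R * frob_norm U ^+ 2) *: U + (2%:R * frob_norm W) *: U.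

Definition bregman (m r : nat) (W : 'M[R]_m) (X Y : 'M[R]_(m, r)) : R :=
  psi W X - psi W Y - frob_inner (gradpsi W Y) (X - Y).

Definition subobj (m r : nat) (W : 'M[R]_m) (lam eta : R) (Ubar U : 'M[R]_(m, r)) : R :=
  lam / 2%:R * frob_norm U ^+ 2 + frob_inner (gradF W Ubar) (U - Ubar)
  + eta^-1 * bregman W U Ubar.

End Defs.

(* A minimiser U+ of the subproblem objective phi is stationary: phi (U+ + s D) - phi U+
   is s <t U+ - G, D> / eta plus a multiple of s^2 that stays bounded for |s| <= 1, where
   t = lam eta + 2 ||W|| + 6 ||U+||^2 comes from the gradient of the Bregman term.  A
   nonnegative function of that shape has vanishing linear coefficient, and D = t U+ - G
   then yields G = t U+.  Hence ||G||^2 = t^2 ||U+||^2, which makes t a nonnegative root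
   of the cubic; writing a = lam eta + 2 ||W||, the cubic reads x^2 (x - a) = t^2 (t - a),
   and x |-> x^2 (x - a) is injective on its positive values, so t is the only
   nonnegative root when U+ <> 0 (and U+ = G = 0 otherwise). *)

From HB Require Import structures.
From mathcomp Require Import all_boot all_order all_algebra.
From mathcomp Require Import reals.
From mathcomp Require Import ring lra.
Set Implicit Arguments. Unset Strict Implicit. Unset Printing Implicit Defensive.
Import Order.TTheory GRing.Theory Num.Theory.
Local Open Scope ring_scope.

Section FrobeniusInner.
Variables (R : realType) (m r : nat).
Implicit Types X Y Z : 'M[R]_(m, r).

Lemma frob_innerC X Y : frob_inner X Y = frob_inner Y X.
Proof. by rewrite /frob_inner -mxtrace_tr trmx_mul trmxK. Qed.

Lemma frob_innerDr X Y Z : frob_inner X (Y + Z) = frob_inner X Y + frob_inner X Z.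
Proof. by rewrite /frob_inner mulmxDr mxtraceD. Qed.

Lemma frob_innerZr X a Y : frob_inner X (a *: Y) = a * frob_inner X Y.
Proof. by rewrite /frob_inner -scalemxAr mxtraceZ. Qed.

Lemma frob_innerBr X Y Z : frob_inner X (Y - Z) = frob_inner X Y - frob_inner X Z.
Proof. by rewrite -scaleN1r frob_innerDr frob_innerZr mulN1r. Qed.

Lemma frob_innerDl X Y Z : frob_inner (Y + Z) X = frob_inner Y X + frob_inner Z X.
Proof. by rewrite frob_innerC frob_innerDr !(frob_innerC X). Qed.

Lemma frob_innerZl X a Y : frob_inner (a *: Y) X = a * frob_inner Y X.
Proof. by rewrite frob_innerC frob_innerZr frob_innerC. Qed.

Lemma frob_innerBl X Y Z : frob_inner (Y - Z) X = frob_inner Y X - frob_inner Z X.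
Proof. by rewrite frob_innerC frob_innerBr !(frob_innerC X). Qed.

Lemma frob_inner_sum X : frob_inner X X = \sum_i \sum_j X j i ^+ 2.
Proof.
rewrite /frob_inner /mxtrace; apply: eq_bigr => i _; rewrite mxE.
by apply: eq_bigr => j _; rewrite mxE expr2.
Qed.

Lemma frob_inner_ge0 X : 0 <= frob_inner X X.
Proof. by rewrite frob_inner_sum; do 2![apply: sumr_ge0 => ? _]; apply: sqr_ge0. Qed.

Lemma frob_inner_eq0 X : (frob_inner X X == 0) = (X == 0).
Proof.
apply/idP/eqP => [|->]; last first.
  by rewrite frob_inner_sum big1 // => i _; rewrite big1 // => j _; rewrite mxE expr0n.
have entry_ge0 i j : 0 <= X j i ^+ 2 := sqr_ge0 _.
have col_ge0 i : 0 <= \sum_j X j i ^+ 2 := sumr_ge0 _ (fun j _ => entry_ge0 i j).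
move/eqP; rewrite frob_inner_sum => /(psumr_eq0P (fun i _ => col_ge0 i)) col0.
apply/matrixP => j i; apply/eqP; rewrite mxE -sqrf_eq0; apply/eqP.
exact: psumr_eq0P (fun j _ => entry_ge0 i j) (col0 i isT) j isT.
Qed.

Lemma frob_norm_sqr X : frob_norm X ^+ 2 = frob_inner X X.
Proof. by rewrite sqr_sqrtr // frob_inner_ge0. Qed.

End FrobeniusInner.

Lemma linear_coef_eq0_of_ge0 (R : realFieldType) (c M : R) (q : R -> R) :
  (forall s, `|s| <= 1 -> `|q s| <= M) ->
  (forall s, `|s| <= 1 -> 0 <= s * c + s ^+ 2 * q s) -> c = 0.
Proof.
move=> qM hge0; apply/eqP; apply: contraT => c_neq0.
have M_ge0 : 0 <= M by apply: le_trans (qM 0 _); rewrite ?normr0.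
(* At [s = - c / (|c| + M)] the expression is at most [- c^2 |c| / (|c| + M)^2]. *)
pose d : R := `|c| + M; pose s := - (c / d).
have d_gt0 : 0 < d by rewrite /d ltr_wpDr // normr_gt0.
have s_le1 : `|s| <= 1.
  by rewrite normrN normf_div (gtr0_norm d_gt0) ler_pdivrMr // mul1r lerDl.
have := hge0 s s_le1.
have := ler_wpM2l (sqr_ge0 s) (le_trans (ler_norm (q s)) (qM s s_le1)).
suff : s * c + s ^+ 2 * M < 0 by lra.
have -> : s * c + s ^+ 2 * M = - (c ^+ 2 * `|c|) / d ^+ 2.
  by rewrite /s /d; field; rewrite lt0r_neq0.
by rewrite mulNr oppr_lt0 divr_gt0 ?exprn_gt0 // mulr_gt0 ?normr_gt0 // exprn_even_gt0.
Qed.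

Lemma quadratic_norm_le (R : realDomainType) (k0 k1 k2 s : R) :
  `|s| <= 1 -> `|k0 + k1 * s + k2 * s ^+ 2| <= `|k0| + `|k1| + `|k2|.
Proof.
move=> s_le1; rewrite (le_trans (ler_normD _ _)) // lerD //.
  by rewrite (le_trans (ler_normD _ _)) // lerD // normrM ler_piMr.
by rewrite normrM normrX ler_piMr // exprn_ile1.
Qed.

Lemma cubic_root_unique (R : realFieldType) (a t u : R) :
  0 <= a -> 0 <= t -> a < u -> t ^+ 2 * (t - a) = u ^+ 2 * (u - a) -> t = u.
Proof.
move=> a_ge0 t_ge0 au htu.
have ta : a < t.
  rewrite ltNge; apply/negP => ta.
  have : t ^+ 2 * (t - a) <= 0 by rewrite mulr_ge0_le0 ?sqr_ge0 ?subr_le0.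
  by rewrite htu leNgt mulr_gt0 ?exprn_gt0 ?subr_gt0 //; lra.
have : (t - u) * (t * (t - a) + u * (u - a) + t * u) = 0.
  by rewrite -(subrr (u ^+ 2 * (u - a))) -{1}htu; ring.
have pos : 0 < t * (t - a) + u * (u - a) + t * u.
  have u_gt0 : 0 < u := le_lt_trans a_ge0 au.
  have : 0 < u * (u - a) by rewrite mulr_gt0 ?subr_gt0.
  have : 0 <= t * (t - a) by rewrite mulr_ge0 // subr_ge0 ltW.
  have : 0 <= t * u by rewrite mulr_ge0 // ltW.
  lra.
by move/eqP; rewrite mulf_eq0 (gt_eqF pos) orbF subr_eq0 => /eqP.
Qed.

Section Subproblem.
Variables (R : realType) (m r : nat) (W : 'M[R]_m) (lam eta : R).
Variable Ubar : 'M[R]_(m, r).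
Hypothesis eta_neq0 : eta != 0.

Let G := gradpsi W Ubar - eta *: gradF W Ubar.
Let t_of (U : 'M[R]_(m, r)) := lam * eta + 2%:R * frob_norm W + 6%:R * frob_norm U ^+ 2.

Lemma subobj_shift (U D : 'M[R]_(m, r)) : exists k0 k1 k2 : R, forall s,
  subobj W lam eta Ubar (U + s *: D) - subobj W lam eta Ubar U =
  s * (eta^-1 * frob_inner (t_of U *: U - G) D) + s ^+ 2 * (k0 + k1 * s + k2 * s ^+ 2).
Proof.
pose A := frob_inner U U; pose B := frob_inner U D; pose C := frob_inner D D.
exists (lam / 2%:R * C + eta^-1 * (6%:R * B ^+ 2 + 3%:R * A * C + frob_norm W * C)),
  (6%:R * eta^-1 * B * C), (3%:R / 2%:R * eta^-1 * C ^+ 2) => s.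
have norm4E (V : 'M[R]_(m, r)) : frob_norm V ^+ 4 = frob_inner V V ^+ 2.
  by rewrite -frob_norm_sqr -exprM.
have shiftE : frob_inner (U + s *: D) (U + s *: D) = A + 2%:R * s * B + s ^+ 2 * C.
  by rewrite frob_innerDl !frob_innerDr !frob_innerZl !frob_innerZr (frob_innerC D U); ring.
rewrite /subobj /bregman /psi /t_of /G !norm4E !frob_norm_sqr shiftE -/A.
rewrite !frob_innerBr !frob_innerDr !frob_innerZr !frob_innerBl !frob_innerZl.
by rewrite -/B; field.
Qed.

Lemma subobj_min_stationary (U : 'M[R]_(m, r)) :
  (forall V, subobj W lam eta Ubar U <= subobj W lam eta Ubar V) -> G = t_of U *: U.
Proof.
move=> U_min; pose D := t_of U *: U - G.
have [k0 [k1 [k2 shiftE]]] := subobj_shift U D.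
have : eta^-1 * frob_inner D D = 0.
  apply: (@linear_coef_eq0_of_ge0 _ _ (`|k0| + `|k1| + `|k2|)
           (fun s => k0 + k1 * s + k2 * s ^+ 2)) => s s_le1.
    exact: quadratic_norm_le.
  by rewrite -shiftE subr_ge0.
by move/eqP; rewrite mulf_eq0 invr_eq0 (negbTE eta_neq0) frob_inner_eq0 subr_eq0 => /eqP.
Qed.

End Subproblem.

Theorem proposition2 (R : realType) (m r : nat) (hm : (0 < m)%N) (hr : (0 < r)%N)
  (W : 'M[R]_m) (hW : W^T = W) (lam L eta : R)
  (hlam : 0 <= lam) (hL : 1 <= L) (heta0 : 0 < eta) (heta1 : eta <= L^-1)
  (Ubar Uplus : 'M[R]_(m, r))
  (hmin : forall U : 'M[R]_(m, r), subobj W lam eta Ubar Uplus <= subobj W lam eta Ubar U) :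
  let G := gradpsi W Ubar - eta *: gradF W Ubar in
  (exists t : R, 0 <= t /\
     t ^+ 3 - (lam * eta + 2%:R * frob_norm W) * t ^+ 2 - 6%:R * frob_norm G ^+ 2 = 0) /\
  (forall t : R, 0 <= t ->
     t ^+ 3 - (lam * eta + 2%:R * frob_norm W) * t ^+ 2 - 6%:R * frob_norm G ^+ 2 = 0 ->
     Uplus = t^-1 *: G).
Proof.
move=> G.
pose a := lam * eta + 2%:R * frob_norm W; pose A := frob_norm Uplus ^+ 2.
have a_ge0 : 0 <= a by rewrite addr_ge0 ?mulr_ge0 ?sqrtr_ge0 // ltW.
have A_ge0 : 0 <= A := sqr_ge0 _.
have GE : G = (a + 6%:R * A) *: Uplus by apply: subobj_min_stationary hmin; rewrite gt_eqF.
have normGE : frob_norm G ^+ 2 = (a + 6%:R * A) ^+ 2 * A.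
  by rewrite GE frob_norm_sqr frob_innerZl frob_innerZr /A frob_norm_sqr mulrA -expr2.
rewrite -/a normGE; split.
  exists (a + 6%:R * A); split; first by rewrite addr_ge0 // mulr_ge0.
  by ring.
move=> t t_ge0 ht.
have [U0|U_neq0] := eqVneq Uplus 0; first by rewrite GE U0 !scaler0.
have A_gt0 : 0 < A by rewrite lt_def A_ge0 andbT /A frob_norm_sqr frob_inner_eq0.
have a_lt : a < a + 6%:R * A by rewrite ltrDl mulr_gt0.
have -> : t = a + 6%:R * A.
  apply: cubic_root_unique a_ge0 t_ge0 a_lt _.
  by apply/eqP; rewrite -subr_eq0 -ht; apply/eqP; ring.
by rewrite GE scalerA mulVf ?scale1r // gt_eqF // (le_lt_trans a_ge0 a_lt).
Qed.
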